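(* For every integer $N\ge 2$, $\displaystyle\sum_{n=2}^N\frac{1}{n}<\frac{\ln N}{(N+1)\ln\!\big(\frac{N+1}{N}\big)}$. *)

From Stdlib Require Import Reals.

(* Write [H N] for the sum and [L x := (x + 1) ln ((x + 1) / x)].  Both
   factors are controlled by the two classical logarithmic-mean bounds
   [2 (t - 1) / (t + 1) < ln t < (t - 1/t) / 2] for [t > 1]:
   the upper bound at [t = (N + 1) / N] gives [L N < 1 + 1/(2N)], and the
   lower bound gives [ln (N + 1) - ln N > 2 / (2N + 1)], which is just enough
   to propagate [H N (1 + 1/(2N)) < ln N] by induction from [N = 2]. *)

From Stdlib Require Import Reals Lra Lia.
From Coquelicot Require Import Coquelicot.
Open Scope R_scope.

Lemma pos_of_derive_pos (f f' : R -> R) (a b : R) :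
  a < b -> f a = 0 ->
  (forall c, a <= c <= b -> is_derive f c (f' c)) ->
  (forall c, a < c < b -> 0 < f' c) ->
  0 < f b.
Proof.
  intros Hab Hfa Hder Hpos.
  destruct (MVT_cor2 f f' a b Hab) as [c [Hmvt Hc]].
  - intros c Hc; apply is_derive_Reals, Hder, Hc.
  - assert (0 < f' c * (b - a)) by (apply Rmult_lt_0_compat; [apply Hpos, Hc | lra]).
    lra.
Qed.

Lemma ln_gt_twice_ratio (t : R) : 1 < t -> 2 * (t - 1) / (t + 1) < ln t.
Proof.
  intros Ht.
  enough (0 < ln t - 2 * (t - 1) / (t + 1)) by lra.
  apply (pos_of_derive_pos (fun s => ln s - 2 * (s - 1) / (s + 1))
           (fun s => (s - 1) ^ 2 / (s * (s + 1) ^ 2)) 1 t Ht).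
  - rewrite ln_1; field_simplify; lra.
  - intros c Hc; auto_derive; [lra|]; field; lra.
  - intros c Hc; apply Rdiv_lt_0_compat; [apply pow_lt | apply Rmult_lt_0_compat;
      [| apply pow_lt]]; lra.
Qed.

Lemma ln_lt_half_sub_inv (t : R) : 1 < t -> ln t < (t - / t) / 2.
Proof.
  intros Ht.
  enough (0 < (t - / t) / 2 - ln t) by lra.
  apply (pos_of_derive_pos (fun s => (s - / s) / 2 - ln s)
           (fun s => (s - 1) ^ 2 / (2 * s ^ 2)) 1 t Ht).
  - rewrite ln_1; field.
  - intros c Hc; auto_derive; [lra|]; field; lra.
  - intros c Hc; apply Rdiv_lt_0_compat; [| apply Rmult_lt_0_compat];
      try apply pow_lt; lra.
Qed.

Lemma succ_mul_ln_succ_div_lt (x : R) : 0 < x ->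
  (x + 1) * ln ((x + 1) / x) < 1 + / (2 * x).
Proof.
  intros Hx.
  assert (Ht : 1 < (x + 1) / x) by (apply Rlt_div_r; lra).
  apply Rlt_le_trans with ((x + 1) * ((((x + 1) / x) - / ((x + 1) / x)) / 2)).
  - apply Rmult_lt_compat_l; [lra | apply ln_lt_half_sub_inv, Ht].
  - right; field; lra.
Qed.

Lemma ln_succ_sub_ln_gt (x : R) : 0 < x -> 2 / (2 * x + 1) < ln (x + 1) - ln x.
Proof.
  intros Hx.
  rewrite <- ln_div by lra.
  replace (2 / (2 * x + 1)) with (2 * ((x + 1) / x - 1) / ((x + 1) / x + 1))
    by (field; lra).
  apply ln_gt_twice_ratio, Rlt_div_r; lra.
Qed.

Lemma sum_f_succ (s n : nat) (f : nat -> R) : (s <= n)%nat ->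
  sum_f s (S n) f = sum_f s n f + f (S n).
Proof.
  intros Hsn; unfold sum_f.
  replace (S n - s)%nat with (S (n - s)) by lia.
  simpl; do 2 f_equal; lia.
Qed.

Lemma sum_f_inv_nonneg (s n : nat) : (1 <= s)%nat -> 0 <= sum_f s n (fun k => / INR k).
Proof.
  intros Hs; apply cond_pos_sum; intros k.
  apply Rlt_le, Rinv_0_lt_compat, lt_0_INR; lia.
Qed.

Lemma sum_inv_mul_lt_ln (N : nat) : (2 <= N)%nat ->
  sum_f 2 N (fun n => / INR n) * (1 + / (2 * INR N)) < ln (INR N).
Proof.
  induction 1 as [| N HN IH].
  - assert (Hln2 : 2 / (2 * 1 + 1) < ln (1 + 1) - ln 1)
      by (apply ln_succ_sub_ln_gt; lra).
    rewrite ln_1 in Hln2; unfold sum_f; simpl; lra.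
  - rewrite sum_f_succ by exact HN.
    assert (HNR : 2 <= INR N) by (apply (le_INR 2); exact HN).
    assert (Hs := sum_f_inv_nonneg 2 N ltac:(lia)).
    assert (Hln := ln_succ_sub_ln_gt (INR N) ltac:(lra)).
    rewrite S_INR.
    set (s := sum_f 2 N (fun n => / INR n)) in *; set (x := INR N) in *.
    assert (Hweight : s * (1 + / (2 * (x + 1))) <= s * (1 + / (2 * x))).
    { apply Rmult_le_compat_l; [exact Hs|].
      apply Rplus_le_compat_l, Rinv_le_contravar; lra. }
    assert (Hnew : / (x + 1) * (1 + / (2 * (x + 1))) < 2 / (2 * x + 1)).
    { apply Rminus_gt_0_lt.
      replace (2 / (2 * x + 1) - / (x + 1) * (1 + / (2 * (x + 1))))
        with (/ (2 * (2 * x + 1) * (x + 1) ^ 2)) by (field; lra).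
      apply Rinv_0_lt_compat, Rmult_lt_0_compat; [| apply pow_lt]; lra. }
    lra.
Qed.

Theorem lemma1 (N : nat) (HN : (2 <= N)%nat) :
  sum_f 2 N (fun n => / INR n)
  < ln (INR N) / ((INR N + 1) * ln ((INR N + 1) / INR N)).
Proof.
  assert (HNR : 2 <= INR N) by (apply (le_INR 2); exact HN).
  assert (Hs := sum_f_inv_nonneg 2 N ltac:(lia)).
  assert (Hmain := sum_inv_mul_lt_ln N HN).
  assert (HL := succ_mul_ln_succ_div_lt (INR N) ltac:(lra)).
  assert (HLpos : 0 < (INR N + 1) * ln ((INR N + 1) / INR N)).
  { apply Rmult_lt_0_compat; [lra|].
    rewrite <- ln_1; apply ln_increasing; [lra | apply Rlt_div_r; lra]. }
  apply Rlt_div_r; [exact HLpos|].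
  set (s := sum_f 2 N (fun n => / INR n)) in *.
  apply Rle_lt_trans with (s * (1 + / (2 * INR N))); [|exact Hmain].
  apply Rmult_le_compat_l; lra.
Qed.
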